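(* Let $\mathcal{A}$ be a unital algebra generated by two unital subalgebras $\mathcal{A}_1,\mathcal{A}_2$. Let $\mathcal{I}_1$ (resp. $\mathcal{I}_2$) be an ideal of $\mathcal{A}_1$ (resp. $\mathcal{A}_2$) and $\mathcal{I}$ the ideal of $\mathcal{A}$ generated by $\mathcal{I}_1\cup \mathcal{I}_2$. Let $\tau: \mathcal{A}\to \mathbb{C}$ be a unital linear functional with $\mathcal{I}\subset \ker(\tau)$ and $\tau': \mathcal{I}\to \mathbb{C}$ a linear functional such that $(\mathcal{A}_1,\mathcal{I}_1)$ and $(\mathcal{A}_2,\mathcal{I}_2)$ are free of type $B$ in $(\mathcal{A},\tau,\mathcal{I},\tau')$. Let $p\in \mathcal{I}_1$ with $\tau'(p)\neq 0$ and define $\varphi:\mathcal{A}\to \mathbb{C}$ by $\varphi(a)=\frac{1}{\tau'(p)}\tau'(p a)$. Then $\varphi$ coincides with $\tau$ on $\mathcal{A}_2$, and $\mathcal{A}_1,\mathcal{A}_2$ are conditionally free with respect to $(\tau,\varphi)$.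
   Context: Freeness of type $B$ in $(\mathcal{A},\tau,\mathcal{I},\tau')$ for $(\mathcal{A}_1,\mathcal{I}_1)$, $(\mathcal{A}_2,\mathcal{I}_2)$: $\mathcal{A}_1,\mathcal{A}_2$ are free w.r.t. $\tau$, and whenever $a_n\in\mathcal{A}_{i_n},\dots,a_1\in\mathcal{A}_{i_1}$, $v\in\mathcal{I}_h$, $b_1\in\mathcal{A}_{j_1},\dots,b_m\in\mathcal{A}_{j_m}$ with any two consecutive indices in $i_n,\dots,i_1,h,j_1,\dots,j_m$ different and all $a_r,b_s$ centered for $\tau$, $\tau'(a_n\cdots a_1vb_1\cdots b_m)=\tau(a_nb_m)\cdots\tau(a_1b_1)\tau'(v)$ if $n=m$ and $i_r=j_r$ for all $r$, and $=0$ otherwise. Conditional freeness w.r.t. $(\tau,\varphi)$: whenever $n>1$, $a_j\in\mathcal{A}_{i_j}$ with consecutive indices different and $\tau(a_j)=0$ for all $j$, $\tau(a_1\cdots a_n)=0$ and $\varphi(a_1\cdots a_n)=\varphi(a_1)\cdots\varphi(a_n)$. *)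

From mathcomp Require Import all_boot all_algebra complex.
From mathcomp Require Import reals.
Set Implicit Arguments. Unset Strict Implicit. Unset Printing Implicit Defensive.
Import GRing.Theory.
Local Open Scope ring_scope.

Section Defs.
Variables (R : realType) (A : algType R[i]).

Definition is_ideal_of (S J : {pred A}) : Prop :=
  [/\ {subset J <= S}, submod_closed J &
      forall a x, a \in S -> x \in J -> a * x \in J /\ x * a \in J].

Definition generates (S1 S2 : {pred A}) : Prop :=
  forall S : {pred A}, subalg_closed S ->
    {subset S1 <= S} -> {subset S2 <= S} -> forall x : A, x \in S.

Definition gen_ideal (J1 J2 I : {pred A}) : Prop :=
  [/\ is_ideal_of predT I, {subset J1 <= I}, {subset J2 <= I} &
      forall J : {pred A}, is_ideal_of predT J ->
        {subset J1 <= J} -> {subset J2 <= J} -> {subset I <= J}].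

(* Words: letters (b, a) with b = false meaning index 1, b = true index 2. *)
Definition pick2 (X1 X2 : {pred A}) (b : bool) : {pred A} := if b then X2 else X1.

Fixpoint alternating (s : seq (bool * A)) : bool :=
  match s with
  | x :: ((y :: _) as t) => (x.1 != y.1) && alternating t
  | _ => true
  end.

Definition wprod (s : seq (bool * A)) : A := \prod_(q <- s) q.2.

Definition in_subalgs (A1 A2 : {pred A}) (s : seq (bool * A)) : bool :=
  all (fun q => q.2 \in pick2 A1 A2 q.1) s.

Definition centered (tau : A -> R[i]) (s : seq (bool * A)) : Prop :=
  forall q, q \in s -> tau q.2 = 0.

Definition free_wrt (A1 A2 : {pred A}) (tau : A -> R[i]) : Prop :=
  forall s : seq (bool * A), (0 < size s)%N -> alternating s ->
    in_subalgs A1 A2 s -> centered tau s -> tau (wprod s) = 0.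

(* Freeness of type B for (A1,I1), (A2,I2) in (A, tau, I, tau').
   sa = [:: (i_n,a_n); ...; (i_1,a_1)], sb = [:: (j_1,b_1); ...; (j_m,b_m)]. *)
Definition free_typeB (A1 A2 I1 I2 : {pred A}) (tau tau' : A -> R[i]) : Prop :=
  free_wrt A1 A2 tau /\
  forall (sa sb : seq (bool * A)) (h : bool) (v : A),
    alternating (sa ++ (h, v) :: sb) ->
    in_subalgs A1 A2 sa -> in_subalgs A1 A2 sb -> v \in pick2 I1 I2 h ->
    centered tau sa -> centered tau sb ->
    tau' (wprod sa * v * wprod sb) =
      if map fst (rev sa) == map fst sb
      then (\prod_(q <- zip (rev sa) sb) tau (q.1.2 * q.2.2)) * tau' v
      else 0.

Definition cond_free (A1 A2 : {pred A}) (tau phi : A -> R[i]) : Prop :=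
  forall s : seq (bool * A), (1 < size s)%N -> alternating s ->
    in_subalgs A1 A2 s -> centered tau s ->
    tau (wprod s) = 0 /\ phi (wprod s) = \prod_(q <- s) phi q.2.

End Defs.

From mathcomp Require Import all_boot all_algebra complex.
From mathcomp Require Import reals.
Set Implicit Arguments. Unset Strict Implicit. Unset Printing Implicit Defensive.
Import GRing.Theory.
Local Open Scope ring_scope.

(* Write a in A2 as tau(a) 1 + a0 with a0 centered.  Freeness of type B kills
   tau'(p a0), since the empty word to the left of p cannot match the word a0 on
   its right; hence tau'(p a) = tau(a) tau'(p) and phi = tau on A2.  For an
   alternating centered word a_1 ... a_n with n >= 2, absorbing a_1 into p when
   a_1 lies in A1 again leaves an empty word facing a nonempty one, so
   phi(a_1 ... a_n) = 0.  And since the word alternates, some a_j lies in A2, so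
   phi(a_j) = tau(a_j) = 0 makes the product of the phi(a_j) vanish as well. *)

Section TypeBFreeness.
Variables (R : realType) (A : algType R[i]).
Variables (A1 A2 I1 I2 : {pred A}) (tau tau' : A -> R[i]).
Hypothesis typeB : free_typeB A1 A2 I1 I2 tau tau'.

Lemma alternating_has_index2 (s : seq (bool * A)) :
  (1 < size s)%N -> alternating s -> has fst s.
Proof.
by case: s => [|[[] x] [|[[] y] t]].
Qed.

Lemma typeB_mul_word_eq0 (h : bool) (v : A) (s : seq (bool * A)) :
  s != [::] -> alternating ((h, v) :: s) -> v \in pick2 I1 I2 h ->
  in_subalgs A1 A2 s -> centered tau s -> tau' (v * wprod s) = 0.
Proof.
move=> s_nil alt vI ins cen.
have cen_nil : centered tau [::] by [].
have := typeB.2 [::] s h v alt isT ins vI cen_nil cen.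
rewrite /wprod big_nil mul1r => ->.
by case: s s_nil {alt ins cen}.
Qed.

Lemma tau'_mul_word_eq0 (p : A) (s : seq (bool * A)) :
  is_ideal_of A1 I1 -> p \in I1 ->
  (1 < size s)%N -> alternating s -> in_subalgs A1 A2 s -> centered tau s ->
  tau' (p * wprod s) = 0.
Proof.
move=> [_ _ I1_ideal] pI1.
case: s => [|[[] a] t] //= size_s alt ins cen.
  exact: (@typeB_mul_word_eq0 false p).
have [aA1 t_in] := andP ins.
have paI1 : p * a \in I1 by have [] := I1_ideal a p aA1 pI1.
have cen_t : centered tau t by move=> q qt; apply: cen; rewrite inE qt orbT.
have t_nil : t != [::] by rewrite -size_eq0 -lt0n.
rewrite /wprod big_cons mulrA.
exact: (@typeB_mul_word_eq0 false (p * a) t).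
Qed.

Lemma tau'_mul_A2 (I : {pred A}) (p a : A) :
  subalg_closed A2 -> is_ideal_of predT I ->
  (forall (c : R[i]) (x y : A), tau (c *: x + y) = c * tau x + tau y) ->
  tau 1 = 1 ->
  (forall (c : R[i]) (x y : A), x \in I -> y \in I ->
     tau' (c *: x + y) = c * tau' x + tau' y) ->
  p \in I1 -> p \in I -> a \in A2 -> tau' (p * a) = tau a * tau' p.
Proof.
move=> [A2_1 A2_lin _] [_ _ I_ideal] tau_lin tau1 tau'_lin pI1 pI aA2.
set a0 := - tau a *: 1 + a.
have a0A2 : a0 \in A2 by exact: A2_lin A2_1 aA2.
have tau_a0 : tau a0 = 0 by rewrite tau_lin tau1 mulr1 addNr.
have pa0I : p * a0 \in I by have [] := I_ideal a0 p isT pI.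
have -> : p * a = tau a *: p + p * a0.
  by rewrite mulrDr -scalerAr mulr1 scaleNr addNKr.
have tau'_pa0 : tau' (p * a0) = 0.
  have := @typeB_mul_word_eq0 false p [:: (true, a0)].
  rewrite /wprod big_seq1; apply=> //=; first by rewrite a0A2.
  by move=> q; rewrite inE => /eqP ->; exact: tau_a0.
by rewrite tau'_lin // tau'_pa0 addr0.
Qed.

Lemma prod_alternating_centered_eq0 (f : A -> R[i]) (s : seq (bool * A)) :
  {in A2, f =1 tau} -> (1 < size s)%N -> alternating s ->
  in_subalgs A1 A2 s -> centered tau s -> \prod_(q <- s) f q.2 = 0.
Proof.
move=> f_tau size_s alt ins cen; apply/eqP; rewrite prodf_seq_eq0.
have /hasP[[[] a] qs //= _] := alternating_has_index2 size_s alt.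
apply/hasP; exists (true, a) => //=.
have aA2 : a \in A2 := allP ins _ qs.
by rewrite f_tau // (cen _ qs).
Qed.

End TypeBFreeness.

Theorem proposition2p12 (R : realType) (A : algType R[i])
  (A1 A2 I1 I2 I : {pred A}) (tau tau' : A -> R[i]) (p : A) :
  subalg_closed A1 -> subalg_closed A2 -> generates A1 A2 ->
  is_ideal_of A1 I1 -> is_ideal_of A2 I2 -> gen_ideal I1 I2 I ->
  (forall (c : R[i]) (x y : A), tau (c *: x + y) = c * tau x + tau y) ->
  tau 1 = 1 ->
  (forall x, x \in I -> tau x = 0) ->
  (forall (c : R[i]) (x y : A), x \in I -> y \in I ->
     tau' (c *: x + y) = c * tau' x + tau' y) ->
  free_typeB A1 A2 I1 I2 tau tau' ->
  p \in I1 -> tau' p != 0 ->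
  let phi := fun a : A => (tau' p)^-1 * tau' (p * a) in
  (forall a, a \in A2 -> phi a = tau a) /\ cond_free A1 A2 tau phi.
Proof.
move=> _ A2_subalg _ I1_ideal _ [I_ideal I1_I _ _] tau_lin tau1 _ tau'_lin
  typeB pI1 tau'p_neq0 phi.
have phi_A2 : {in A2, phi =1 tau}.
  move=> a aA2; rewrite /phi (tau'_mul_A2 typeB A2_subalg I_ideal) ?I1_I //.
  by rewrite [tau a * _]mulrC mulKf.
split=> // s size_s alt ins cen; split.
  exact: typeB.1 (ltnW size_s) alt ins cen.
rewrite (prod_alternating_centered_eq0 phi_A2 size_s alt ins cen).
by rewrite /phi (tau'_mul_word_eq0 typeB I1_ideal pI1 size_s alt ins cen) mulr0.
Qed.
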